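(* Let $m,n\in\mathbb N$, $M_A=M_m(\mathbb C)$, $M_B=M_n(\mathbb C)$, let $U_A\in M_A$, $U_B\in M_B$ be unitary matrices, and let $\psi:M_A\to M_B$ be a quantum $(U_A,U_B)$-channel. Then the following are equivalent: (1) $\psi$ is $(U_A,U_B)$-entanglement breaking; (2) $\psi$ is in $(U_A,U_B)$-Holevo form.
   Context: For a unitary $U\in M_k(\mathbb C)$, a matrix $X$ is $U$-positive if $U^*X\ge0$; $X$ is a $U$-density matrix (quantum $U$-state) if moreover $\mathrm{Tr}(U^*X)=1$. For $r\in\mathbb N$, $U^r=\mathrm{diag}(U,\dots,U)$. A linear map $\psi:M_A\to M_B$ is $(U_A,U_B)$-CP if for every $r$ and every $V=[V_{ij}]\in M_r(M_A)$ with $(U_A^r)^*V\ge0$ one has $(U_B^r)^*[\psi(V_{ij})]\ge0$; it is a quantum $(U_A,U_B)$-channel if it is $(U_A,U_B)$-CP and $\phi(V):=U_B^*\psi(U_AV)$ is trace preserving (i.e. $\phi$ is a quantum channel). For unitaries $W_1\in M_p(\mathbb C)$, $W_2\in M_q(\mathbb C)$, a quantum $W_1\otimes W_2$-state $\rho\in M_p\otimes M_q$ is $W_1\otimes W_2$-separable if it is a convex combination of quantum $W_1\otimes W_2$-states of the form $\rho_1\otimes\rho_2$ with $\rho_1$ $W_1$-positive and $\rho_2$ $W_2$-positive. $\psi$ is $(U_A,U_B)$-entanglement breaking if for every $k\in\mathbb N$ and every $I_k\otimes U_A$-density matrix $S\in M_k(\mathbb C)\otimes M_A$, the matrix $(\mathrm{id}_k\otimes\psi)(S)$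 is $I_k\otimes U_B$-separable. $\psi$ is in $(U_A,U_B)$-Holevo form if $\psi(\rho)=\sum_k D_k\,\mathrm{Tr}(F_k\rho)$ for all $\rho\in M_A$ (finite sum), where each $D_k\in M_B$ is a $U_B$-density matrix and $\{F_k\}\subset M_A$ is a $U_A$-positive operator valued measure, i.e. each $F_kU_A$ is positive semidefinite and $\sum_kF_kU_A=I_A$. *)

(* The complex field is modelled as R[i] (real_closed's
   `complex`) for an arbitrary R : realType (any realType is a model of the
   real numbers, so R[i] is a model of C). *)
From HB Require Import structures.
From mathcomp Require Import all_boot all_order all_algebra.
From mathcomp Require Import reals.
From mathcomp Require Import complex mxtens.
Set Implicit Arguments. Unset Strict Implicit. Unset Printing Implicit Defensive.
Import Order.TTheory GRing.Theory Num.Theory.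
Local Open Scope ring_scope.

Section QDefs.
Variable R : realType.
Local Notation C := R[i].

Definition adjmx (p q : nat) (A : 'M[C]_(p, q)) : 'M[C]_(q, p) :=
  (map_mx Num.conj A)^T.

Definition is_unitary_mx (p : nat) (U : 'M[C]_p) : Prop :=
  U *m adjmx U = 1%:M /\ adjmx U *m U = 1%:M.

Definition psdmx (p : nat) (X : 'M[C]_p) : Prop :=
  adjmx X = X /\ forall v : 'cV[C]_p, 0 <= (adjmx v *m X *m v) 0 0.

Definition Upos (p : nat) (U X : 'M[C]_p) : Prop := psdmx (adjmx U *m X).

Definition Udensity (p : nat) (U X : 'M[C]_p) : Prop :=
  Upos U X /\ \tr (adjmx U *m X) = 1.

(* M_r(M_p) is identified with M_r ⊗ M_p = 'M_(r*p) via the Kronecker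
   convention of mxtens (E_ij ⊗ Y = block matrix with Y in block (i,j)). *)
(* U^r = diag(U,...,U) = I_r ⊗ U *)
Definition Upow (r p : nat) (U : 'M[C]_p) : 'M[C]_(r * p) := (1%:M : 'M[C]_r) *t U.

Definition blk (r p : nat) (V : 'M[C]_(r * p)) (i j : 'I_r) : 'M[C]_p :=
  \matrix_(a, b) V (mxtens_index (i, a)) (mxtens_index (j, b)).

(* id_r ⊗ psi, i.e. [V_ij] |-> [psi(V_ij)] *)
Definition ampl (r p q : nat) (psi : 'M[C]_p -> 'M[C]_q) (V : 'M[C]_(r * p))
  : 'M[C]_(r * q) :=
  \sum_(i < r) \sum_(j < r) (delta_mx i j *t psi (blk V i j)).

Definition UCP (p q : nat) (UA : 'M[C]_p) (UB : 'M[C]_q)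
  (psi : 'M[C]_p -> 'M[C]_q) : Prop :=
  forall (r : nat) (V : 'M[C]_(r * p)),
    psdmx (adjmx (Upow r UA) *m V) ->
    psdmx (adjmx (Upow r UB) *m ampl psi V).

Definition Uchannel (p q : nat) (UA : 'M[C]_p) (UB : 'M[C]_q)
  (psi : {linear 'M[C]_p -> 'M[C]_q}) : Prop :=
  UCP UA UB psi /\
  forall V : 'M[C]_p, \tr (adjmx UB *m psi (UA *m V)) = \tr V.

Definition Useparable (p q : nat) (W1 : 'M[C]_p) (W2 : 'M[C]_q)
  (rho : 'M[C]_(p * q)) : Prop :=
  Udensity (W1 *t W2) rho /\
  exists (N : nat) (lam : 'I_N -> C) (r1 : 'I_N -> 'M[C]_p) (r2 : 'I_N -> 'M[C]_q),
    [/\ forall k, 0 <= lam k,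
        \sum_(k < N) lam k = 1,
        forall k, [/\ Udensity (W1 *t W2) (r1 k *t r2 k), Upos W1 (r1 k)
                    & Upos W2 (r2 k)]
      & rho = \sum_(k < N) lam k *: (r1 k *t r2 k)].

Definition Uentanglement_breaking (p q : nat) (UA : 'M[C]_p) (UB : 'M[C]_q)
  (psi : 'M[C]_p -> 'M[C]_q) : Prop :=
  forall (k : nat) (S : 'M[C]_(k * p)),
    Udensity ((1%:M : 'M[C]_k) *t UA) S ->
    Useparable (1%:M : 'M[C]_k) UB (ampl psi S).

Definition UHolevo_form (p q : nat) (UA : 'M[C]_p) (UB : 'M[C]_q)
  (psi : 'M[C]_p -> 'M[C]_q) : Prop :=
  exists (N : nat) (D : 'I_N -> 'M[C]_q) (F : 'I_N -> 'M[C]_p),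
    [/\ forall k, Udensity UB (D k),
        forall k, psdmx (F k *m UA),
        \sum_(k < N) F k *m UA = 1%:M
      & forall rho : 'M[C]_p, psi rho = \sum_(k < N) \tr (F k *m rho) *: D k].

End QDefs.

(* Holevo form => entanglement breaking: if psi rho = sum_k Tr(F_k rho) D_k,
   then (id ⊗ psi)(S) = sum_k sigma_k ⊗ D_k, where sigma_k is the partial trace
   of S against F_k.  Each sigma_k is positive because F_k U_A and U_A^* S are,
   and their traces add up to Tr(U_A^* S) = 1 because sum_k F_k U_A = I;
   normalising the sigma_k gives a separable decomposition.

   Entanglement breaking => Holevo form: feed psi the rotated maximally
   entangled state S = (I ⊗ U_A) Omega / m, Omega = sum_ij E_ij ⊗ E_ij, whose
   (i,j) block is U_A E_ij / m.
   The (i,j) block of a separable decomposition sum_k lam_k r_k ⊗ s_k of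
   (id ⊗ psi)(S) expresses psi(U_A E_ij) through the entries of the r_k, so by
   linearity psi rho = sum_k Tr(F_k rho) D_k with F_k proportional to
   r_k^T U_A^* and D_k to s_k; trace preservation forces sum_k F_k U_A = I.

   All positivity facts come from the Gram factorisation A = X^* X of a
   positive semidefinite A, obtained from the spectral theorem. *)

From HB Require Import structures.
From mathcomp Require Import all_boot all_order all_algebra.
From mathcomp Require Import reals.
From mathcomp Require Import complex mxtens spectral.
From mathcomp Require Import ring.
Set Implicit Arguments. Unset Strict Implicit. Unset Printing Implicit Defensive.
Import Order.TTheory GRing.Theory Num.Theory.
Local Open Scope ring_scope.

Section MatrixFacts.
Variable R : realType.
Local Notation C := R[i].

Lemma adjmxE p q (A : 'M[C]_(p, q)) i j : adjmx A i j = (A j i)^*.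
Proof. by rewrite !mxE. Qed.

Lemma adjmxK p q (A : 'M[C]_(p, q)) : adjmx (adjmx A) = A.
Proof. by apply/matrixP => i j; rewrite !adjmxE conjCK. Qed.

Lemma adjmxM p q s (A : 'M[C]_(p, q)) (B : 'M[C]_(q, s)) :
  adjmx (A *m B) = adjmx B *m adjmx A.
Proof. by rewrite /adjmx map_mxM trmx_mul. Qed.

Lemma adjmx1 p : adjmx (1%:M : 'M[C]_p) = 1%:M.
Proof. by rewrite /adjmx map_mx1 trmx1. Qed.

Lemma adjmxD p q (A B : 'M[C]_(p, q)) : adjmx (A + B) = adjmx A + adjmx B.
Proof. by rewrite /adjmx map_mxD linearD. Qed.

Lemma adjmxZ p q (c : C) (A : 'M[C]_(p, q)) : adjmx (c *: A) = c^* *: adjmx A.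
Proof. by rewrite /adjmx map_mxZ linearZ. Qed.

Lemma adjmx_tens p q s t (A : 'M[C]_(p, q)) (B : 'M[C]_(s, t)) :
  adjmx (A *t B) = adjmx A *t adjmx B.
Proof. by rewrite /adjmx map_mxT trmx_tens. Qed.

Lemma adjmx_mxsub p q p' q' f g (A : 'M[C]_(p, q)) :
  adjmx (mxsub f g A) = mxsub g f (adjmx A) :> 'M_(q', p').
Proof. by rewrite /adjmx map_mxsub trmx_mxsub. Qed.

Lemma adjmx_trmxC p q (A : 'M[C]_(p, q)) : adjmx A = (A ^t* )%sesqui.
Proof. by rewrite /adjmx map_trmx. Qed.

Lemma mxtrace_mul_delta p (A : 'M[C]_p) i j : \tr (A *m delta_mx i j) = A j i.
Proof.
rewrite -[delta_mx i j](mul_delta_mx (0 : 'I_1)) mulmxA mxtrace_mulC mulmxA.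
by rewrite -rowE -colE trace_mx11 !mxE.
Qed.

Lemma mxtrace_mull_inj p (A B : 'M[C]_p) :
  (forall V, \tr (A *m V) = \tr (B *m V)) -> A = B.
Proof. by move=> eqAB; apply/matrixP => i j; rewrite -!mxtrace_mul_delta. Qed.

Lemma mxtrace_trmx_mul p (A B : 'M[C]_p) : \tr (A^T *m B) = \sum_i \sum_j A i j * B i j.
Proof.
rewrite /mxtrace; under eq_bigr do rewrite mxE.
by rewrite exchange_big; apply: eq_bigr => i _; apply: eq_bigr => j _; rewrite mxE.
Qed.

End MatrixFacts.

Section PositiveSemidefinite.
Variable R : realType.
Local Notation C := R[i].

Lemma mxtrace_gram k p (X : 'M[C]_(k, p)) :
  \tr (adjmx X *m X) = \sum_i \sum_j X i j * (X i j)^*.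
Proof.
rewrite /mxtrace exchange_big; apply: eq_bigr => j _; rewrite mxE.
by apply: eq_bigr => i _; rewrite adjmxE mulrC.
Qed.

Lemma mxtrace_gram_ge0 k p (X : 'M[C]_(k, p)) : 0 <= \tr (adjmx X *m X).
Proof.
by rewrite mxtrace_gram; do 2![apply: sumr_ge0 => ? _]; apply: mul_conjC_ge0.
Qed.

Lemma mxtrace_gram_eq0 k p (X : 'M[C]_(k, p)) : \tr (adjmx X *m X) = 0 -> X = 0.
Proof.
have term_ge0 (x : C) : 0 <= x * x^* by apply: mul_conjC_ge0.
rewrite mxtrace_gram => /psumr_eq0P X0; apply/matrixP => i j; rewrite mxE.
have /psumr_eq0P Xi0 := X0 (fun i _ => sumr_ge0 _ (fun j _ => term_ge0 _)) i isT.
by apply/eqP; rewrite -mul_conjC_eq0 Xi0.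
Qed.

Lemma psdmx_gram k p (X : 'M[C]_(k, p)) : psdmx (adjmx X *m X).
Proof.
split=> [|v]; first by rewrite adjmxM adjmxK.
by rewrite -!mulmxA mulmxA -adjmxM -trace_mx11 mxtrace_gram_ge0.
Qed.

Lemma psdmx_factor p (A : 'M[C]_p) : psdmx A -> exists X : 'M_p, A = adjmx X *m X.
Proof.
move=> [hA qA].
have /orthomx_spectralP : A \is normalmx by apply/normalmxP; rewrite -adjmx_trmxC hA.
set P := spectralmx A; set d := spectral_diag A.
have PP : P *m adjmx P = 1%:M.
  by rewrite adjmx_trmxC; apply/unitarymxP/spectral_unitarymx.
rewrite invmx_unitary ?spectral_unitarymx // -adjmx_trmxC => eA.
have d_ge0 l : 0 <= d 0 l.
  have /matrixP/(_ l l) : P *m A *m adjmx P = diag_mx d.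
    by rewrite eA !mulmxA PP mul1mx -mulmxA PP mulmx1.
  rewrite [RHS]mxE eqxx mulr1n => <-.
  have := qA (adjmx (row l P)); rewrite adjmxK -row_mul.
  suff -> : (P *m A *m adjmx P) l l = (row l (P *m A) *m adjmx (row l P)) 0 0 by [].
  by rewrite !mxE; apply: eq_bigr => k _; rewrite !mxE.
pose s := \row_l sqrtC (d 0 l).
have ss : adjmx (diag_mx s) *m diag_mx s = diag_mx d.
  rewrite /adjmx map_diag_mx tr_diag_mx mulmx_diag; apply/matrixP => i j.
  rewrite !mxE /=; congr (_ *+ _).
  by rewrite geC0_conj ?sqrtC_ge0 // -expr2 sqrtCK.
exists (diag_mx s *m P).
by rewrite adjmxM mulmxA -[adjmx P *m _ *m _]mulmxA ss.
Qed.

Lemma psdmx0 p : psdmx (0 : 'M[C]_p).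
Proof. by rewrite -(mulmx0 _ (adjmx (0 : 'M[C]_p))); apply: psdmx_gram. Qed.

Lemma psdmx1 p : psdmx (1%:M : 'M[C]_p).
Proof. by rewrite -[X in psdmx X]mulmx1 -[X in X *m _]adjmx1; apply: psdmx_gram. Qed.

Lemma psdmxD p (A B : 'M[C]_p) : psdmx A -> psdmx B -> psdmx (A + B).
Proof.
move=> [hA qA] [hB qB]; split=> [|v]; first by rewrite adjmxD hA hB.
by rewrite mulmxDr mulmxDl mxE addr_ge0.
Qed.

Lemma psdmx_sum (I : finType) p (A : I -> 'M[C]_p) :
  (forall i, psdmx (A i)) -> psdmx (\sum_i A i).
Proof. by move=> hA; apply: big_ind => //; [apply: psdmx0 | apply: psdmxD]. Qed.

Lemma psdmxZ p (c : C) (A : 'M[C]_p) : 0 <= c -> psdmx A -> psdmx (c *: A).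
Proof.
move=> c_ge0 [hA qA]; split=> [|v]; first by rewrite adjmxZ hA geC0_conj.
by rewrite -scalemxAr -scalemxAl mxE mulr_ge0.
Qed.

Lemma psdmx_congr p q (A : 'M[C]_p) (Y : 'M[C]_(p, q)) :
  psdmx A -> psdmx (adjmx Y *m A *m Y).
Proof.
move=> /psdmx_factor [X ->].
by rewrite mulmxA -mulmxA -adjmxM; apply: psdmx_gram.
Qed.

Lemma psdmx_mxsub k p (f : 'I_k -> 'I_p) (A : 'M[C]_p) :
  psdmx A -> psdmx (mxsub f f A).
Proof.
move=> /psdmx_factor [X ->].
by rewrite mxsub_mul -adjmx_mxsub; apply: psdmx_gram.
Qed.

Lemma psdmx_tens p q (A : 'M[C]_p) (B : 'M[C]_q) :
  psdmx A -> psdmx B -> psdmx (A *t B).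
Proof.
move=> /psdmx_factor [X ->] /psdmx_factor [Y ->].
by rewrite -tensmx_mul -adjmx_tens; apply: psdmx_gram.
Qed.

Lemma psdmx_trmx p (A : 'M[C]_p) : psdmx A -> psdmx A^T.
Proof.
move=> /psdmx_factor [X ->]; rewrite trmx_mul /adjmx trmxK -/(adjmx _).
have -> : X^T = adjmx (map_mx Num.conj X).
  by rewrite /adjmx -map_mx_comp map_mx_id // => x; apply: conjCK.
exact: psdmx_gram.
Qed.

Lemma mxtrace_psd_ge0 p (A : 'M[C]_p) : psdmx A -> 0 <= \tr A.
Proof. by move=> /psdmx_factor [X ->]; apply: mxtrace_gram_ge0. Qed.

Lemma psdmx_trace_eq0 p (A : 'M[C]_p) : psdmx A -> \tr A = 0 -> A = 0.
Proof.
by move=> /psdmx_factor [X ->] /mxtrace_gram_eq0 ->; rewrite mulmx0.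
Qed.

End PositiveSemidefinite.

Section TensorBlocks.
Variable R : realType.
Local Notation C := R[i].

Lemma sum_mxtens_index (V : nmodType) r p (f : 'I_(r * p) -> V) :
  \sum_s f s = \sum_(i < r) \sum_(a < p) f (mxtens_index (i, a)).
Proof.
rewrite pair_big /= (reindex (@mxtens_index r p)) /=; last first.
  by exists (@mxtens_unindex r p) => s _; rewrite (mxtens_indexK, mxtens_unindexK).
by apply: eq_bigr => -[].
Qed.

Lemma blkP r p (A B : 'M[C]_(r * p)) :
  (forall i j, blk A i j = blk B i j) -> A = B.
Proof.
move=> eqAB; apply/matrixP => s t.
case: (mxtens_indexP s) => i a; case: (mxtens_indexP t) => j b.
by have /matrixP/(_ a b) := eqAB i j; rewrite !mxE.
Qed.

Lemma blk_sum (I : finType) r p (V : I -> 'M[C]_(r * p)) i j :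
  blk (\sum_k V k) i j = \sum_k blk (V k) i j.
Proof.
by apply/matrixP => a b; rewrite !(mxE, summxE); apply: eq_bigr => k; rewrite mxE.
Qed.

Lemma blkZ r p (c : C) (V : 'M[C]_(r * p)) i j : blk (c *: V) i j = c *: blk V i j.
Proof. by apply/matrixP => a b; rewrite !mxE. Qed.

Lemma blk_tens r p (A : 'M[C]_r) (B : 'M[C]_p) i j : blk (A *t B) i j = A i j *: B.
Proof. by apply/matrixP => a b; rewrite !mxE !mxtens_indexK. Qed.

Lemma blk_ampl r p q (psi : 'M[C]_p -> 'M[C]_q) (V : 'M[C]_(r * p)) i j :
  blk (ampl psi V) i j = psi (blk V i j).
Proof.
rewrite blk_sum; under eq_bigr do rewrite blk_sum.
rewrite pair_big (bigD1 (i, j)) //= big1 => [|[i' j'] /negPf ne_ij]; last first.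
  by rewrite blk_tens mxE (eq_sym i) (eq_sym j) -xpair_eqE ne_ij scale0r.
by rewrite blk_tens mxE !eqxx scale1r addr0.
Qed.

Lemma blk_tens1_mulmx r p (X : 'M[C]_p) (V : 'M[C]_(r * p)) i j :
  blk ((1%:M *t X) *m V) i j = X *m blk V i j.
Proof.
apply/matrixP => a b; rewrite !mxE sum_mxtens_index (bigD1 i) //=.
rewrite [X in _ + X]big1 ?addr0.
  by apply: eq_bigr => c _; rewrite tensmxE !mxE eqxx mul1r.
move=> i' ne_i'i; apply: big1 => c _.
by rewrite tensmxE mxE eq_sym (negbTE ne_i'i) !mul0r.
Qed.

Lemma blk_mulmx_tens1 r p (V : 'M[C]_(r * p)) (Y : 'M[C]_p) i j :
  blk (V *m (1%:M *t Y)) i j = blk V i j *m Y.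
Proof.
apply/matrixP => a b; rewrite !mxE sum_mxtens_index (bigD1 j) //=.
rewrite [X in _ + X]big1 ?addr0.
  by apply: eq_bigr => c _; rewrite tensmxE !mxE eqxx mul1r.
move=> j' ne_j'j; apply: big1 => c _.
by rewrite tensmxE mxE (negbTE ne_j'j) mul0r mulr0.
Qed.

Lemma mxtrace_blk r p (V : 'M[C]_(r * p)) : \tr V = \sum_i \tr (blk V i i).
Proof.
rewrite /mxtrace sum_mxtens_index.
by apply: eq_bigr => i _; apply: eq_bigr => a _; rewrite mxE.
Qed.

Lemma mxtrace_tens p q (A : 'M[C]_p) (B : 'M[C]_q) : \tr (A *t B) = \tr A * \tr B.
Proof.
by rewrite mxtrace_blk mulr_suml; apply: eq_bigr => i _; rewrite blk_tens mxtraceZ.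
Qed.

Lemma tens1mx1 r p : (1%:M : 'M[C]_r) *t (1%:M : 'M[C]_p) = 1%:M.
Proof.
apply: blkP => i j; rewrite blk_tens; apply/matrixP => a b.
rewrite !mxE (inj_eq (can_inj (@mxtens_indexK r p))) xpair_eqE.
by case: (i == j); case: (a == b); rewrite ?mulr1n ?mulr0n ?mulr1 ?mulr0.
Qed.

Lemma tensmxZl p q s t (c : C) (A : 'M[C]_(p, q)) (B : 'M[C]_(s, t)) :
  (c *: A) *t B = c *: (A *t B).
Proof. by apply/matrixP => u v; rewrite !mxE mulrA. Qed.

Lemma adjmx_tens1_mul_tens r q (W D : 'M[C]_q) (A : 'M[C]_r) :
  adjmx (1%:M *t W) *m (A *t D) = A *t (adjmx W *m D).
Proof. by rewrite adjmx_tens adjmx1 tensmx_mul mul1mx. Qed.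

End TensorBlocks.

Section PartialTrace.
Variable R : realType.
Local Notation C := R[i].

Definition partial_trace r p (G : 'M[C]_p) (P : 'M[C]_(r * p)) : 'M[C]_r :=
  \matrix_(i, j) \tr (G *m blk P i j).

Lemma partial_trace_suml (I : finType) r p (G : I -> 'M[C]_p) (P : 'M[C]_(r * p)) :
  \sum_k partial_trace (G k) P = partial_trace (\sum_k G k) P.
Proof.
apply/matrixP => i j; rewrite summxE !mxE mulmx_suml raddf_sum.
by apply: eq_bigr => k _; rewrite mxE.
Qed.

Lemma mxtrace_partial_trace1 r p (P : 'M[C]_(r * p)) :
  \tr (partial_trace 1%:M P) = \tr P.
Proof. by rewrite mxtrace_blk; apply: eq_bigr => i _; rewrite mxE mul1mx. Qed.

Lemma partial_trace_tens1_mulmx r p (G X : 'M[C]_p) (P : 'M[C]_(r * p)) :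
  partial_trace G ((1%:M *t X) *m P) = partial_trace (G *m X) P.
Proof. by apply/matrixP => i j; rewrite !mxE blk_tens1_mulmx mulmxA. Qed.

Lemma psdmx_partial_trace1 r p (P : 'M[C]_(r * p)) :
  psdmx P -> psdmx (partial_trace 1%:M P).
Proof.
move=> psdP.
have -> : partial_trace 1%:M P =
    \sum_a mxsub (fun i => mxtens_index (i, a)) (fun i => mxtens_index (i, a)) P.
  apply/matrixP => i j; rewrite !mxE mul1mx summxE.
  by apply: eq_bigr => a _; rewrite !mxE.
by apply: psdmx_sum => a; apply: psdmx_mxsub.
Qed.

Lemma psdmx_partial_trace r p (G : 'M[C]_p) (P : 'M[C]_(r * p)) :
  psdmx G -> psdmx P -> psdmx (partial_trace G P).
Proof.
move=> /psdmx_factor [X ->] psdP.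
pose Y : 'M_(r * p) := 1%:M *t adjmx X.
have -> : partial_trace (adjmx X *m X) P = partial_trace 1%:M (adjmx Y *m P *m Y).
  apply/matrixP => i j; rewrite !mxE mul1mx -mulmxA mxtrace_mulC /Y.
  by rewrite blk_mulmx_tens1 adjmx_tens adjmx1 adjmxK blk_tens1_mulmx.
by apply/psdmx_partial_trace1/psdmx_congr.
Qed.

End PartialTrace.

Section HolevoEntanglementBreaking.
Variable R : realType.
Local Notation C := R[i].

Lemma Udensity_tens r q (W D : 'M[C]_q) (A : 'M[C]_r) :
  psdmx A -> \tr A = 1 -> Udensity W D -> Udensity (1%:M *t W) (A *t D).
Proof.
move=> psdA trA [psdD trD]; rewrite /Udensity /Upos adjmx_tens1_mul_tens.
by rewrite mxtrace_tens trA trD mulr1; split=> //; apply: psdmx_tens.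
Qed.

Lemma psdmx_density_factor r (sigma : 'M[C]_r) : (0 < r)%N -> psdmx sigma ->
  exists2 tau, psdmx tau /\ \tr tau = 1 & sigma = \tr sigma *: tau.
Proof.
move=> r_gt0 psd_sigma; have [tr0|tr_neq0] := eqVneq (\tr sigma) 0.
  exists ((r%:R)^-1 *: 1%:M); last by rewrite tr0 scale0r (psdmx_trace_eq0 psd_sigma).
  split; first by apply: psdmxZ; [rewrite invr_ge0 ler0n | apply: psdmx1].
  by rewrite mxtraceZ mxtrace1 mulVf // pnatr_eq0 -lt0n.
exists ((\tr sigma)^-1 *: sigma); last by rewrite scalerA divff // scale1r.
split; last by rewrite mxtraceZ mulVf.
by apply: psdmxZ => //; rewrite invr_ge0 mxtrace_psd_ge0.
Qed.

Lemma Useparable_sum r q N (W : 'M[C]_q) (sigma : 'I_N -> 'M[C]_r)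
    (D : 'I_N -> 'M[C]_q) :
  (forall k, psdmx (sigma k)) -> (forall k, Udensity W (D k)) ->
  \sum_k \tr (sigma k) = 1 ->
  Useparable 1%:M W (\sum_k sigma k *t D k).
Proof.
move=> psd_sigma dens_D tr_sigma.
have r_gt0 : (0 < r)%N.
  have [r0|//] := posnP r; move/eqP: tr_sigma; rewrite eq_sym big1 ?oner_eq0 // => k _.
  by rewrite /mxtrace big1 // => i; have := ltn_ord i; rewrite {2}r0.
have [tau dens_tau sigmaE] :=
  fin_all_exists2 (fun k => psdmx_density_factor r_gt0 (psd_sigma k)).
split.
  split; rewrite /Upos mulmx_sumr.
    apply: psdmx_sum => k; rewrite adjmx_tens1_mul_tens.
    by case: (dens_D k) => psdD _; apply: psdmx_tens.
  rewrite raddf_sum /= -[RHS]tr_sigma; apply: eq_bigr => k _.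
  by case: (dens_D k) => _ trD; rewrite adjmx_tens1_mul_tens mxtrace_tens trD mulr1.
exists N, (fun k => \tr (sigma k)), tau, D; split=> // [k|k|].
- exact: mxtrace_psd_ge0.
- have [psd_tau tr_tau] := dens_tau k; case: (dens_D k) => psdD _.
  by split; [apply: Udensity_tens | rewrite /Upos adjmx1 mul1mx | ].
- by apply: eq_bigr => k _; rewrite {1}sigmaE tensmxZl.
Qed.

Lemma ampl_holevo r p q N (psi : 'M[C]_p -> 'M[C]_q) (F : 'I_N -> 'M[C]_p)
    (D : 'I_N -> 'M[C]_q) (S : 'M[C]_(r * p)) :
  (forall rho, psi rho = \sum_k \tr (F k *m rho) *: D k) ->
  ampl psi S = \sum_k partial_trace (F k) S *t D k.
Proof.
move=> psiE; apply: blkP => i j; rewrite blk_ampl psiE blk_sum.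
by apply: eq_bigr => k _; rewrite blk_tens mxE.
Qed.

Lemma holevo_entanglement_breaking m n (UA : 'M[C]_m) (UB : 'M[C]_n)
    (psi : 'M[C]_m -> 'M[C]_n) :
  is_unitary_mx UA -> UHolevo_form UA UB psi -> Uentanglement_breaking UA UB psi.
Proof.
move=> [UA_UAt _] [N [D [F [dens_D psd_FU sum_FU psiE]]]] r S [psdP trP].
set P := adjmx (1%:M *t UA) *m S in psdP trP.
have -> : S = (1%:M *t UA) *m P.
  by rewrite mulmxA adjmx_tens adjmx1 tensmx_mul mul1mx UA_UAt tens1mx1 mul1mx.
rewrite (ampl_holevo _ psiE); under eq_bigr do rewrite partial_trace_tens1_mulmx.
apply: Useparable_sum => // [k|]; first exact: psdmx_partial_trace.
by rewrite -raddf_sum /= partial_trace_suml sum_FU mxtrace_partial_trace1.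
Qed.

End HolevoEntanglementBreaking.

Section EntanglementBreakingHolevo.
Variable R : realType.
Local Notation C := R[i].

Lemma linear_delta_expansion p q N (psi : {linear 'M[C]_p -> 'M[C]_q}) (U : 'M[C]_p)
    (c : 'I_N -> 'M[C]_p) (D : 'I_N -> 'M[C]_q) :
  U *m adjmx U = 1%:M ->
  (forall i j, psi (U *m delta_mx i j) = \sum_k c k i j *: D k) ->
  forall rho, psi rho = \sum_k \tr ((c k)^T *m adjmx U *m rho) *: D k.
Proof.
move=> UUt psiE rho.
rewrite -[in LHS](mul1mx rho) -UUt -mulmxA (matrix_sum_delta (adjmx U *m rho)).
rewrite mulmx_sumr linear_sum; under eq_bigr do rewrite mulmx_sumr linear_sum.
under eq_bigr do under eq_bigr do rewrite -scalemxAr linearZ /= psiE scaler_sumr.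
under eq_bigr do rewrite exchange_big; rewrite exchange_big.
apply: eq_bigr => k _; rewrite -mulmxA mxtrace_trmx_mul scaler_suml.
apply: eq_bigr => i _; rewrite scaler_suml.
by apply: eq_bigr => j _; rewrite scalerA mulrC.
Qed.

Lemma holevo_povm_sum1 p q N (UA : 'M[C]_p) (UB : 'M[C]_q) (psi : 'M[C]_p -> 'M[C]_q)
    (F : 'I_N -> 'M[C]_p) (D : 'I_N -> 'M[C]_q) :
  (forall k, \tr (adjmx UB *m D k) = 1) ->
  (forall rho, psi rho = \sum_k \tr (F k *m rho) *: D k) ->
  (forall V, \tr (adjmx UB *m psi (UA *m V)) = \tr V) ->
  \sum_k F k *m UA = 1%:M.
Proof.
move=> trD psiE TP; apply: mxtrace_mull_inj => V.
rewrite mul1mx -[RHS]TP psiE mulmx_suml mulmx_sumr !raddf_sum /=.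
by apply: eq_bigr => k _; rewrite -scalemxAr mxtraceZ trD mulr1 mulmxA.
Qed.

Definition max_entangled m : 'cV[C]_(m * m) :=
  \col_s ((@mxtens_unindex m m s).1 == (@mxtens_unindex m m s).2)%:R.

Definition choi_input m (UA : 'M[C]_m) : 'M[C]_(m * m) :=
  (1%:M *t UA) *m ((m%:R)^-1 *: (max_entangled m *m adjmx (max_entangled m))).

Lemma blk_max_entangled m i j :
  blk (max_entangled m *m adjmx (max_entangled m)) i j = delta_mx i j.
Proof.
apply/matrixP => a b; rewrite !mxE big_ord1 !mxE !mxtens_indexK /=.
rewrite (eq_sym a) (eq_sym b).
by case: (i == a); case: (j == b); rewrite /= ?conjC1 ?conjC0 ?mulr1 ?mulr0.
Qed.

Lemma blk_choi_input m (UA : 'M[C]_m) i j :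
  blk (choi_input UA) i j = (m%:R)^-1 *: (UA *m delta_mx i j).
Proof. by rewrite blk_tens1_mulmx blkZ blk_max_entangled scalemxAr. Qed.

Lemma Udensity_choi_input m (UA : 'M[C]_m) :
  (0 < m)%N -> adjmx UA *m UA = 1%:M -> Udensity (1%:M *t UA) (choi_input UA).
Proof.
move=> m_gt0 UAt_UA; rewrite /Udensity /Upos.
have -> : adjmx (1%:M *t UA) *m choi_input UA =
    (m%:R)^-1 *: (max_entangled m *m adjmx (max_entangled m)).
  by rewrite mulmxA adjmx_tens adjmx1 tensmx_mul mul1mx UAt_UA tens1mx1 mul1mx.
split.
  apply: psdmxZ; first by rewrite invr_ge0 ler0n.
  by rewrite -{1}[max_entangled m]adjmxK; apply: psdmx_gram.
rewrite mxtraceZ mxtrace_blk.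
under eq_bigr do
  rewrite blk_max_entangled -[delta_mx _ _]mul1mx mxtrace_mul_delta mxE eqxx.
by rewrite sumr_const card_ord mulVf // pnatr_eq0 -lt0n.
Qed.

Lemma Udensity_rescale r q (W : 'M[C]_q) (A : 'M[C]_r) (B : 'M[C]_q) :
  Udensity (1%:M *t W) (A *t B) -> Upos 1%:M A -> Upos W B ->
  \tr A != 0 /\ Udensity W (\tr A *: B).
Proof.
rewrite /Udensity /Upos adjmx1 mul1mx adjmx_tens1_mul_tens mxtrace_tens.
move=> [_ trAB] psdA psdB; split.
  by apply: contra_eq_neq trAB => ->; rewrite mul0r eq_sym oner_neq0.
by rewrite -scalemxAr mxtraceZ; split=> //; apply: psdmxZ (mxtrace_psd_ge0 psdA) psdB.
Qed.

Lemma entanglement_breaking_holevo m n (UA : 'M[C]_m) (UB : 'M[C]_n)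
    (psi : {linear 'M[C]_m -> 'M[C]_n}) :
  is_unitary_mx UA -> (forall V, \tr (adjmx UB *m psi (UA *m V)) = \tr V) ->
  Uentanglement_breaking UA UB psi -> UHolevo_form UA UB psi.
Proof.
move=> [UA_UAt UAt_UA] TP EB; have [m0|m_gt0] := posnP m.
  (* For m = 0 no U_A-state exists to test with, but the empty Holevo form works. *)
  subst m; exists 0, (fun=> 0), (fun=> 0); split=> [[]|[]||rho] //.
    by apply/matrixP => -[].
  by rewrite big_ord0 (_ : rho = 0) ?linear0 //; apply/matrixP => -[].
have [_ [N [lam [r1 [r2 [lam_ge0 _ dens_r12 sepE]]]]]] :=
  EB m _ (Udensity_choi_input m_gt0 UAt_UA).
pose t k := \tr (r1 k).
have dens_t k : t k != 0 /\ Udensity UB (t k *: r2 k).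
  by case: (dens_r12 k); apply: Udensity_rescale.
pose c k := (m%:R * lam k / t k) *: r1 k.
have psi_delta i j : psi (UA *m delta_mx i j) = \sum_k c k i j *: (t k *: r2 k).
  have := congr1 (fun X => m%:R *: blk X i j) sepE.
  rewrite /= blk_ampl blk_choi_input linearZ scalerA mulfV ?pnatr_eq0 -?lt0n //.
  rewrite scale1r => ->.
  rewrite blk_sum scaler_sumr; apply: eq_bigr => k _.
  rewrite blkZ blk_tens !mxE !scalerA; congr (_ *: _).
  by field; case: (dens_t k).
exists N, (fun k => t k *: r2 k), (fun k => (c k)^T *m adjmx UA).
have psiE := linear_delta_expansion UA_UAt psi_delta.
split=> // [k|k|]; first by case: (dens_t k).
  case: (dens_r12 k) => _ + _; rewrite /Upos adjmx1 mul1mx => psd_r1.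
  rewrite -mulmxA UAt_UA mulmx1; apply/psdmx_trmx/psdmxZ => //.
  by rewrite divr_ge0 ?mulr_ge0 ?ler0n ?mxtrace_psd_ge0.
by apply: (holevo_povm_sum1 _ psiE TP) => k; case: (dens_t k) => _ [].
Qed.

End EntanglementBreakingHolevo.

Unset Implicit Arguments.

Theorem theorem6p3 (R : realType) (m n : nat)
  (UA : 'M[R[i]]_m) (UB : 'M[R[i]]_n)
  (psi : {linear 'M[R[i]]_m -> 'M[R[i]]_n}) :
  is_unitary_mx UA -> is_unitary_mx UB -> Uchannel UA UB psi ->
  (Uentanglement_breaking UA UB psi <-> UHolevo_form UA UB psi).
Proof.
move=> UA_unitary _ [_ trace_preserving]; split.
  exact: (entanglement_breaking_holevo UA_unitary trace_preserving).
exact: holevo_entanglement_breaking.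
Qed.
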